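(* Let $C=p_r\dots p_s$ be a configuration of g-2PATH of Type II having free left hand, with $r<0$. Let $j_0$ be the smallest integer $j$ with $0\le j\le s$ such that $W(r,j)$ is finite. Then $C$ satisfies the condition of noninterference of extensions (CNI) if and only if $\mathrm{NI}(r+1,j_0)$ holds.
   Context: Positions are elements of $\mathbb{Z}^2$; with $\epsilon_0=(1,0),\epsilon_1=(0,1),\epsilon_2=(-1,0),\epsilon_3=(0,-1)$, positions $p,p'$ are adjacent if $p'-p$ is some $\epsilon_i$. A configuration of g-2PATH is a sequence $C=p_r\dots p_s$ ($r\le0\le s$) of positions with $p_0=(0,0)$, consecutive positions adjacent, all positions distinct, and $p_l,p_m$ not adjacent whenever $|l-m|\ge2$. For $p\in C$, $\mathrm{bc}_C(p)=(b_0,\dots,b_3)$ with $b_i=1$ iff $p+\epsilon_i\in C$. For $r\le i\le0\le j\le s$: $W(i,j)$ is the set of pairs $(x_0,x_1)$ of finite, possibly empty, sequences of positions such that $x_0p_i\dots p_jx_1$ is a configuration $C'$ of g-2PATH (general at $p_0$) with $\mathrm{bc}_{C'}(p_l)=\mathrm{bc}_C(p_l)$ for $i\le l\le j$; $U(i,j)$, $V(i,j)$ are the sets of first, resp. second, components of its elements; $f(i,j)=\sup\{|x_0|:x_0\in U(i,j)\}$, $g(i,j)=\sup\{|x_1|:x_1\in V(i,j)\}$ (possibly $\infty$). $\mathrm{NI}(i,j)$ means $W(i,j)=U(i,j)\times V(i,j)$. $I=\{(i,j): r\le i-1,\ W(i,j)$ infinite, $W(i-1,j)$ finite$\}$, $J=\{(i,j):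 j+1\le s,\ W(i,j)$ infinite, $W(i,j+1)$ finite$\}$, $K=\{(i,j): W(i,j)$ finite$\}$. $C$ satisfies CNI if $\mathrm{NI}(i,j)$ holds for all $(i,j)\in I\cup J\cup K$. The left hand of $C$ is free if $r=0$ or ($r<0$ and $f(r+1,s)=\infty$), closed otherwise; the right hand is free if $s=0$ or ($s>0$ and $g(r,s-1)=\infty$), closed otherwise. $C$ is of Type II if exactly one hand is free. *)

From Stdlib Require Import ZArith List Lia.
Import ListNotations.
Open Scope Z_scope.

Definition pos := (Z * Z)%type.

Definition pos_eq_dec : forall p q : pos, {p = q} + {p <> q}.
Proof. decide equality; apply Z.eq_dec. Defined.

Definition eps (i : nat) : pos :=
  match i with
  | O => (1, 0)
  | 1%nat => (0, 1)
  | 2%nat => (-1, 0)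
  | _ => (0, -1)
  end.

Definition padd (p q : pos) : pos := (fst p + fst q, snd p + snd q).

Definition adjacent (p p' : pos) : Prop :=
  exists i : nat, (i < 4)%nat /\ p' = padd p (eps i).

Definition is_path (L : list pos) : Prop :=
  (forall a : nat, (S a < length L)%nat ->
      adjacent (nth a L (0,0)) (nth (S a) L (0,0))) /\
  (forall a b : nat, (a < length L)%nat -> (b < length L)%nat -> a <> b ->
      nth a L (0,0) <> nth b L (0,0)) /\
  (forall a b : nat, (b < length L)%nat -> (a + 2 <= b)%nat ->
      ~ adjacent (nth a L (0,0)) (nth b L (0,0))).

(* A sequence p_r ... p_s is stored as its first index r and the list
   [p_r; ...; p_s]. *)
Record config := mkConfig { cr : Z; cl : list pos }.

Definition cs (C : config) : Z := cr C + Z.of_nat (length (cl C)) - 1.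

Definition pt (C : config) (l : Z) : pos := nth (Z.to_nat (l - cr C)) (cl C) (0,0).

Definition is_config (C : config) : Prop :=
  cr C <= 0 <= cs C /\ pt C 0 = (0,0) /\ is_path (cl C).

Definition bc (L : list pos) (p : pos) : list bool :=
  map (fun i => if in_dec pos_eq_dec (padd p (eps i)) L then true else false)
      [0%nat; 1%nat; 2%nat; 3%nat].

Definition seg (C : config) (i j : Z) : list pos :=
  firstn (Z.to_nat (j - i + 1)) (skipn (Z.to_nat (i - cr C)) (cl C)).

(* W(i,j): x0 p_i ... p_j x1 is a configuration (indexed so that p_0 keeps
   index 0; then p_0 = (0,0) and the index range condition hold
   automatically) with the same bond configurations at p_i..p_j. *)
Definition W (C : config) (i j : Z) (x : list pos * list pos) : Prop :=
  let L' := fst x ++ seg C i j ++ snd x in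
  is_path L' /\
  forall l : Z, i <= l <= j -> bc L' (pt C l) = bc (cl C) (pt C l).

Definition U (C : config) (i j : Z) (x0 : list pos) : Prop :=
  exists x1, W C i j (x0, x1).
Definition V (C : config) (i j : Z) (x1 : list pos) : Prop :=
  exists x0, W C i j (x0, x1).

Definition finite_set {A : Type} (P : A -> Prop) : Prop :=
  exists l : list A, forall x, P x -> In x l.

Definition sup_len_infinite (P : list pos -> Prop) : Prop :=
  forall n : nat, exists x, P x /\ (n <= length x)%nat.

Definition f_inf (C : config) (i j : Z) : Prop := sup_len_infinite (U C i j).
Definition g_inf (C : config) (i j : Z) : Prop := sup_len_infinite (V C i j).

Definition NI (C : config) (i j : Z) : Prop :=
  forall x0 x1, W C i j (x0, x1) <-> (U C i j x0 /\ V C i j x1).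

Definition W_fin (C : config) (i j : Z) : Prop := finite_set (W C i j).

Definition in_range (C : config) (i j : Z) : Prop :=
  cr C <= i <= 0 /\ 0 <= j <= cs C.

Definition inI (C : config) (i j : Z) : Prop :=
  in_range C i j /\ cr C <= i - 1 /\ ~ W_fin C i j /\ W_fin C (i - 1) j.
Definition inJ (C : config) (i j : Z) : Prop :=
  in_range C i j /\ j + 1 <= cs C /\ ~ W_fin C i j /\ W_fin C i (j + 1).
Definition inK (C : config) (i j : Z) : Prop :=
  in_range C i j /\ W_fin C i j.

Definition CNI (C : config) : Prop :=
  forall i j, inI C i j \/ inJ C i j \/ inK C i j -> NI C i j.

Definition left_free (C : config) : Prop :=
  cr C = 0 \/ (cr C < 0 /\ f_inf C (cr C + 1) (cs C)).
Definition right_free (C : config) : Prop :=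
  cs C = 0 \/ (cs C > 0 /\ g_inf C (cr C) (cs C - 1)).

Definition typeII (C : config) : Prop :=
  (left_free C /\ ~ right_free C) \/ (~ left_free C /\ right_free C).

(* Since the left hand is free, W(r+1,s) has extensions x_0 of unbounded
   length; cutting such an extension back to p_i ... p_j only lengthens x_0,
   so W(i,j) is infinite whenever i > r.  Hence every pair of J and K has
   i = r, and every pair of I is (r+1, j) with W(r,j) finite, i.e. j >= j_0.
   At i = r noninterference is automatic, as x_0 is always empty: by the bond
   configuration of p_r its last point would lie in C next to the end p_r,
   hence equal p_(r+1), which already occurs two steps later.  Finally NI(i,j')
   implies NI(i,j) for j >= j': a right extension of p_i ... p_j can be
   exchanged freely, because no p_l with l > i touches the left extension. *)

From Stdlib Require Import ZArith List Lia.
Import ListNotations.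
Open Scope Z_scope.

Lemma adjacent_sym p q : adjacent p q -> adjacent q p.
Proof.
  intros [d [Hd ->]]. destruct p as [a b].
  destruct d as [|[|[|[|d]]]];
    [exists 2%nat | exists 3%nat | exists 0%nat | exists 1%nat | lia];
    unfold padd; simpl; split; try lia; f_equal; lia.
Qed.

Lemma adjacent_neq p q : adjacent p q -> p <> q.
Proof.
  intros [d [Hd ->]]. destruct p as [a b].
  destruct d as [|[|[|[|d]]]]; unfold padd; simpl; intro E; inversion E; lia.
Qed.

Lemma bc_eq_iff (L1 L2 : list pos) p :
  bc L1 p = bc L2 p <->
  forall d, (d < 4)%nat -> (In (padd p (eps d)) L1 <-> In (padd p (eps d)) L2).
Proof.
  assert (Hbit : forall q,
    (if in_dec pos_eq_dec q L1 then true else false) =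
    (if in_dec pos_eq_dec q L2 then true else false) <-> (In q L1 <-> In q L2)).
  { intros q. destruct (in_dec pos_eq_dec q L1), (in_dec pos_eq_dec q L2);
      split; intros; try tauto; discriminate. }
  unfold bc; cbn [map]. split.
  - intros E d Hd. injection E; intros.
    destruct d as [|[|[|[|d]]]]; try lia; apply Hbit; assumption.
  - intros H. repeat f_equal; apply Hbit, H; lia.
Qed.

Lemma path_adjacent_middle (A B : list pos) a b :
  is_path (A ++ a :: b :: B) -> adjacent a b.
Proof.
  intros [Hadj _].
  specialize (Hadj (length A)). rewrite nth_middle in Hadj.
  replace (S (length A)) with (length A + 1)%nat in Hadj by lia.
  rewrite app_nth2_plus in Hadj. apply Hadj.
  rewrite length_app; simpl; lia.
Qed.

Lemma path_distinct_gap2 (A B : list pos) a b c :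
  is_path (A ++ a :: b :: c :: B) -> a <> c.
Proof.
  intros [_ [Hdist _]].
  specialize (Hdist (length A) (length A + 2)%nat).
  rewrite nth_middle, app_nth2_plus in Hdist.
  apply Hdist; rewrite ?length_app; simpl; lia.
Qed.

Lemma path_start_neighbor (L : list pos) a b q :
  is_path (a :: b :: L) -> adjacent a q -> In q (a :: b :: L) -> q = b.
Proof.
  intros [_ [_ Hfar]] Haq [<-|[<-|Hq]].
  - now destruct (adjacent_neq _ _ Haq).
  - reflexivity.
  - destruct (In_nth L q (0,0) Hq) as [m [Hm <-]].
    exfalso. apply (Hfar 0%nat (S (S m))); simpl; [lia|lia|exact Haq].
Qed.

Lemma path_neighbor_notin_prefix (A S B : list pos) n q :
  is_path (A ++ S ++ B) -> (1 <= n < length S)%nat ->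
  adjacent (nth n S (0,0)) q -> ~ In q A.
Proof.
  intros [_ [_ Hfar]] Hn Hadj Hq.
  destruct (In_nth A q (0,0) Hq) as [k [Hk <-]].
  apply (Hfar k (length A + n)%nat).
  - rewrite !length_app. lia.
  - lia.
  - rewrite app_nth1 by lia. rewrite app_nth2_plus, app_nth1 by lia.
    now apply adjacent_sym.
Qed.

Lemma finite_set_fst_bounded {A B : Type} (P : list A * B -> Prop) :
  finite_set P -> exists n, forall x0 x1, P (x0, x1) -> (length x0 <= n)%nat.
Proof.
  intros [l Hl]. exists (list_max (map (fun x => length (fst x)) l)).
  intros x0 x1 HP.
  apply Hl, (in_map (fun x => length (fst x))) in HP.
  pose proof (proj1 (list_max_le (map (fun x => length (fst x)) l) _) (le_n _)) as Hmax.
  rewrite Forall_forall in Hmax. exact (Hmax _ HP).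
Qed.

Lemma firstn_add {A : Type} (n m : nat) (L : list A) :
  firstn (n + m) L = firstn n L ++ firstn m (skipn n L).
Proof.
  revert L; induction n as [|n IH]; intros [|a L]; simpl;
    rewrite ?firstn_nil; f_equal; auto.
Qed.

Section Segments.

Variable C : config.

Lemma seg_app i k j : cr C <= i <= k -> k <= j + 1 ->
  seg C i j = seg C i (k - 1) ++ seg C k j.
Proof.
  intros. unfold seg.
  replace (Z.to_nat (j - i + 1))
    with (Z.to_nat (k - 1 - i + 1) + Z.to_nat (j - k + 1))%nat by lia.
  rewrite firstn_add, skipn_skipn. do 3 f_equal. lia.
Qed.

Lemma seg_nil i : seg C i (i - 1) = [].
Proof. unfold seg. now replace (Z.to_nat (i - 1 - i + 1)) with 0%nat by lia. Qed.

Lemma seg_length i j : cr C <= i -> i <= j + 1 -> j <= cs C ->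
  length (seg C i j) = Z.to_nat (j - i + 1).
Proof. intros. unfold seg, cs in *. rewrite length_firstn, length_skipn. lia. Qed.

Lemma nth_seg i j l : cr C <= i <= l -> l <= j ->
  nth (Z.to_nat (l - i)) (seg C i j) (0,0) = pt C l.
Proof.
  intros. unfold seg, pt. rewrite nth_firstn.
  destruct (Nat.ltb_spec (Z.to_nat (l - i)) (Z.to_nat (j - i + 1))); [|lia].
  rewrite nth_skipn. f_equal. lia.
Qed.

Lemma seg_start j : cr C < j <= cs C ->
  exists a b rest, cl C = a :: b :: rest /\ pt C (cr C) = a /\
    seg C (cr C) j = a :: b :: firstn (Z.to_nat (j - cr C - 1)) rest.
Proof.
  unfold cs, seg, pt. rewrite Z.sub_diag. destruct (cl C) as [|a [|b rest]];
    simpl; intros; try lia.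
  exists a, b, rest. repeat split.
  replace (Z.to_nat (j - cr C + 1)) with (S (S (Z.to_nat (j - cr C - 1)))) by lia.
  reflexivity.
Qed.

End Segments.

Section Extensions.

Variable C : config.

Lemma NI_intro i j :
  (forall x0 x1 y0 y1, W C i j (x0, y1) -> W C i j (y0, x1) -> W C i j (x0, x1)) ->
  NI C i j.
Proof.
  intros Hmix x0 x1. split.
  - intros HW. split; [exists x1 | exists x0]; exact HW.
  - intros [[y1 H1] [y0 H2]]. exact (Hmix _ _ _ _ H1 H2).
Qed.

Lemma W_shrink i i' j' j x0 x1 : cr C <= i <= i' -> i' <= j' + 1 -> j' <= j ->
  W C i j (x0, x1) -> W C i' j' (x0 ++ seg C i (i' - 1), seg C (j' + 1) j ++ x1).
Proof.
  intros Hi Hij Hj [HP HB]. unfold W in *; cbn [fst snd] in *.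
  replace ((x0 ++ seg C i (i' - 1)) ++ seg C i' j' ++ seg C (j' + 1) j ++ x1)
    with (x0 ++ seg C i j ++ x1).
  - split; [exact HP|]. intros l Hl. apply HB. lia.
  - rewrite (seg_app C i i' j), (seg_app C i' (j' + 1) j) by lia.
    replace (j' + 1 - 1) with j' by lia. now rewrite !app_assoc.
Qed.

Lemma f_inf_shrink i i' j' j : cr C <= i <= i' -> i' <= j' + 1 -> j' <= j ->
  f_inf C i j -> f_inf C i' j'.
Proof.
  intros Hi Hij Hj Hf n. destruct (Hf n) as [x0 [[x1 HW] Hn]].
  eexists. split.
  - eexists. exact (W_shrink i i' j' j x0 x1 Hi Hij Hj HW).
  - rewrite length_app. lia.
Qed.

Lemma W_fin_not_f_inf i j : W_fin C i j -> ~ f_inf C i j.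
Proof.
  intros Hfin Hf. destruct (finite_set_fst_bounded _ Hfin) as [n Hn].
  destruct (Hf (S n)) as [x0 [[x1 HW] Hlen]].
  specialize (Hn _ _ HW). lia.
Qed.

Lemma W_left_end_nil j x0 x1 : is_path (cl C) -> cr C < j <= cs C ->
  W C (cr C) j (x0, x1) -> x0 = [].
Proof.
  intros HC Hj [HP HB]; cbn [fst snd] in *.
  destruct x0 as [|x x0]; [reflexivity|exfalso].
  destruct (exists_last (l := x :: x0) ltac:(discriminate)) as [A [q E]].
  rewrite E in HP, HB.
  destruct (seg_start C j Hj) as [a [b [rest [Hcl [Ha Hseg]]]]].
  specialize (HB (cr C) ltac:(lia)).
  rewrite Ha, Hcl, Hseg in *.
  set (T := firstn (Z.to_nat (j - cr C - 1)) rest) in *.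
  replace ((A ++ [q]) ++ (a :: b :: T) ++ x1) with (A ++ q :: a :: b :: T ++ x1)
    in HP, HB by (now rewrite <- app_assoc).
  destruct (adjacent_sym _ _ (path_adjacent_middle _ _ _ _ HP)) as [d [Hd Hq]].
  assert (Hqb : q = b).
  { apply (path_start_neighbor rest a b q HC); [now exists d|].
    rewrite Hq. apply (proj1 (bc_eq_iff _ _ _) HB d Hd).
    rewrite <- Hq. apply in_app_iff. simpl. tauto. }
  exact (path_distinct_gap2 _ _ _ _ _ HP Hqb).
Qed.

Lemma NI_left_end j : is_path (cl C) -> cr C < j <= cs C -> NI C (cr C) j.
Proof.
  intros HC Hj. apply NI_intro. intros x0 x1 y0 y1 H1 H2.
  rewrite (W_left_end_nil j x0 y1 HC Hj H1).
  rewrite (W_left_end_nil j y0 x1 HC Hj H2) in H2. exact H2.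
Qed.

Lemma W_extend_right i j' j x0 x1 y0 : cr C <= i <= j' -> j' < j -> j <= cs C ->
  W C i j' (x0, seg C (j' + 1) j ++ x1) -> W C i j (y0, x1) -> W C i j (x0, x1).
Proof.
  intros Hi Hj' Hj [HP HB] [HP2 HB2]. unfold W in *; cbn [fst snd] in *.
  assert (E : x0 ++ seg C i j ++ x1 = x0 ++ seg C i j' ++ seg C (j' + 1) j ++ x1).
  { rewrite (seg_app C i (j' + 1) j) by lia.
    replace (j' + 1 - 1) with j' by lia. now rewrite !app_assoc. }
  rewrite E. split; [exact HP|]. intros l Hl.
  destruct (Z_le_gt_dec l j') as [Hle|Hgt]; [apply HB; lia|].
  rewrite <- (HB2 l Hl), <- E. rewrite <- E in HP.
  apply bc_eq_iff. intros d Hd.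
  assert (Hadj : adjacent (nth (Z.to_nat (l - i)) (seg C i j) (0,0)) (padd (pt C l) (eps d)))
    by (rewrite nth_seg by lia; now exists d).
  assert (Hn : (1 <= Z.to_nat (l - i) < length (seg C i j))%nat)
    by (rewrite seg_length; lia).
  pose proof (path_neighbor_notin_prefix _ _ _ _ _ HP Hn Hadj).
  pose proof (path_neighbor_notin_prefix _ _ _ _ _ HP2 Hn Hadj).
  rewrite !in_app_iff. tauto.
Qed.

Lemma NI_extend_right i j' j : cr C <= i <= j' -> j' <= j -> j <= cs C ->
  NI C i j' -> NI C i j.
Proof.
  intros Hi Hj' Hj HNI. apply NI_intro. intros x0 x1 y0 y1 H1 H2.
  destruct (Z.eq_dec j' j) as [<-|Hne].
  { apply HNI. split; [exists y1 | exists y0]; assumption. }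
  apply (W_extend_right i j' j x0 x1 y0); try lia; [|exact H2].
  pose proof (W_shrink i i j' j x0 y1 ltac:(lia) ltac:(lia) ltac:(lia) H1) as S1.
  pose proof (W_shrink i i j' j y0 x1 ltac:(lia) ltac:(lia) ltac:(lia) H2) as S2.
  rewrite seg_nil, app_nil_r in S1, S2.
  apply HNI. split; [eexists | eexists]; eassumption.
Qed.

Lemma W_fin_left_free i j : left_free C -> cr C <= i <= 0 -> 0 <= j <= cs C ->
  W_fin C i j -> i = cr C.
Proof.
  intros Hleft Hi Hj Hfin.
  destruct (Z.eq_dec i (cr C)) as [|Hne]; [assumption|exfalso].
  destruct Hleft as [|[_ Hf]]; [lia|].
  apply (W_fin_not_f_inf i j Hfin), (f_inf_shrink (cr C + 1) i j (cs C)); lia || assumption.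
Qed.

End Extensions.

Theorem theorem11 (C : config) :
  is_config C -> typeII C -> left_free C -> cr C < 0 ->
  forall j0 : Z,
    0 <= j0 <= cs C ->
    W_fin C (cr C) j0 ->
    (forall j : Z, 0 <= j < j0 -> ~ W_fin C (cr C) j) ->
    (CNI C <-> NI C (cr C + 1) j0).
Proof.
  intros [_ [_ HC]] _ Hleft Hr j0 Hj0 Hfin0 Hmin.
  split.
  - intros HCNI. apply HCNI. left.
    repeat split; try lia.
    + intros Hfin. pose proof (W_fin_left_free C (cr C + 1) j0 Hleft ltac:(lia) Hj0 Hfin). lia.
    + now replace (cr C + 1 - 1) with (cr C) by lia.
  - intros HNI i j [[[Hi Hj] [Hi1 [_ Hfin]]] | [[[Hi Hj] [Hj1 [_ Hfin]]] | [[Hi Hj] Hfin]]].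
    + pose proof (W_fin_left_free C (i - 1) j Hleft ltac:(lia) Hj Hfin).
      replace i with (cr C + 1) by lia.
      destruct (Z_lt_le_dec j j0) as [Hlt|Hge].
      * exfalso. apply (Hmin j); [lia|]. now replace (cr C) with (i - 1).
      * apply (NI_extend_right C _ j0); lia || assumption.
    + rewrite (W_fin_left_free C i (j + 1) Hleft Hi ltac:(lia) Hfin).
      apply NI_left_end; lia || assumption.
    + rewrite (W_fin_left_free C _ _ Hleft Hi Hj Hfin).
      apply NI_left_end; lia || assumption.
Qed.
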